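(* The number $|\Pi_{\mathfrak t}^+|$ of isotropy summands of the following flag manifolds of classical Lie groups is: (A) $SU(n)/S(U(n_1)\times\cdots\times U(n_s))$, $n=\sum n_i$: $s(s-1)/2$. (B i) $SO(2n+1)/U(n_1)\times\cdots\times U(n_s)\times U(1)^m$, $n\ge 2$: $(s+m)^2+s$. (B ii) $SO(2n+1)/U(n_1)\times\cdots\times U(n_s)\times U(1)^m\times SO(2t+1)$, $t\ge2$: $(s+m)^2+s$. (C i) $Sp(n)/U(n_1)\times\cdots\times U(n_s)\times U(1)^m$, $n\ge3$: $(s+m)^2$. (C ii) $Sp(n)/U(n_1)\times\cdots\times U(n_s)\times U(1)^m\times Sp(t)$, $t\ge3$: $(s+m)^2+(s+m)$. (D i) $SO(2n)/U(n_1)\times\cdots\times U(n_s)\times U(1)^m$, $n\ge4$: $(s+m)^2-m$. (D ii) $SO(2n)/U(n_1)\times\cdots\times U(n_s)\times U(1)^m\times SO(2t)$, $t\ge4$: $(s+m)^2+s$. Here in cases (B i), (C i), (D i) one has $\sum n_i+m=n$, $n_i>1$, $m,s\ge0$; in cases (B ii), (C ii), (D ii) one has $\sum n_i+t+m=n$, $n_i>1$, $m,s\ge0$.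
   Context: For a flag manifold $M=U/K$ of a compact semisimple Lie group, with complexified Lie algebra $\mathfrak g$, Cartan subalgebra $\mathfrak h$, root system $\Pi$, and isotropy algebra with complexification $\mathfrak k^{\mathbb C}=\mathfrak h\oplus\bigoplus_{\alpha\in\Pi_\Theta}\mathfrak g_\alpha$ (for a subset $\Pi_\Theta$ of roots generated by a set of simple roots), let $\Pi_M=\Pi\setminus\Pi_\Theta$, $\mathfrak t=\{H\in i\mathfrak h_{\mathbb R}:\alpha(H)=0\ \forall\alpha\in\Pi_\Theta\}$ (where $\mathfrak h_{\mathbb R}$ is the real span of the coroots), and $k$ the restriction of functionals to $\mathfrak t$. The t-roots are $\Pi_{\mathfrak t}=k(\Pi_M)$ and the positive t-roots $\Pi^+_{\mathfrak t}=k(\Pi_M\cap\Pi^+)$. Positive t-roots $\xi$ are in bijection with the irreducible summands $\mathfrak m_\xi=\sum_{k(\alpha)=\xi}\mathfrak u_\alpha$ (with $\mathfrak u_\alpha$ the real span of $X_\alpha-X_{-\alpha},\,i(X_\alpha+X_{-\alpha})$) of the isotropy representation on the tangent space $\mathfrak m=\bigoplus_\xi\mathfrak m_\xi$; the number of isotropy summands is $|\Pi^+_{\mathfrak t}|$. The subgroups are the standard block embeddings (the $U(n_i)$ and $U(1)$ factors corresponding to consecutive blocks of the coordinates $\varepsilon_1,\dots,\varepsilon_n$ of the standard Cartan subalgebra, the last factor $SO(2t+1)$, $Sp(t)$ or $SO(2t)$ to the last $t$ coordinates). *)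

From HB Require Import structures.
From mathcomp Require Import all_boot all_order all_algebra.
From mathcomp Require Import reals.
Set Implicit Arguments. Unset Strict Implicit. Unset Printing Implicit Defensive.
Import Order.TTheory GRing.Theory Num.Theory.
Local Open Scope ring_scope.

(** Coordinates: a root / weight is an integer row vector a, viewed as the
    functional  sum_i a_i eps_i  on the real Cartan subalgebra 'rV[R]_n
    (coordinates w.r.t. the standard basis dual to eps_1..eps_n; the factor i
    of i h_R is irrelevant for the counting). *)

Definition ev (n : nat) (i : 'I_n) : 'rV[int]_n := delta_mx 0 i.

Definition pairing (R : numDomainType) (n : nat) (a : 'rV[int]_n) (H : 'rV[R]_n) : R :=
  \sum_i (a 0 i)%:~R * H 0 i.

Definition posrootsA (n : nat) (a : 'rV[int]_n) : Prop :=
  exists i j : 'I_n, (i < j)%N /\ a = ev i - ev j.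

Definition long_root (n : nat) (a : 'rV[int]_n) : Prop :=
  exists i j : 'I_n, i != j /\
    (a = ev i - ev j \/ a = ev i + ev j \/ a = - ev i - ev j).
Definition long_pos (n : nat) (a : 'rV[int]_n) : Prop :=
  exists i j : 'I_n, (i < j)%N /\ (a = ev i - ev j \/ a = ev i + ev j).

Definition rootsB (n : nat) (a : 'rV[int]_n) : Prop :=
  long_root a \/ exists i : 'I_n, a = ev i \/ a = - ev i.
Definition posrootsB (n : nat) (a : 'rV[int]_n) : Prop :=
  long_pos a \/ exists i : 'I_n, a = ev i.
Definition rootsC (n : nat) (a : 'rV[int]_n) : Prop :=
  long_root a \/ exists i : 'I_n, a = ev i *+ 2 \/ a = - (ev i *+ 2).
Definition posrootsC (n : nat) (a : 'rV[int]_n) : Prop :=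
  long_pos a \/ exists i : 'I_n, a = ev i *+ 2.
Definition rootsD (n : nat) (a : 'rV[int]_n) : Prop := long_root a.
Definition posrootsD (n : nat) (a : 'rV[int]_n) : Prop := long_pos a.

(** Consecutive blocks of coordinates with sizes bs (0-based coordinates):
    blk bs i = index of the block containing coordinate i. *)
Definition blk (bs : seq nat) (i : nat) : nat :=
  count (fun k => (sumn (take k.+1 bs) <= i)%N) (iota 0 (size bs)).

Definition same_U (bs : seq nat) (i j : nat) : bool :=
  [&& (i < sumn bs)%N, (j < sumn bs)%N & blk bs i == blk bs j].

(** Roots of the isotropy subgroup (Pi_Theta):
    - type A: eps_i - eps_j, i <> j in the same U(n_k)-block;
    - types B,C,D: the same, plus the roots of the last factor
      SO(2t+1)/Sp(t)/SO(2t), i.e. roots supported in the last tt coordinates. *)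
Definition thetaA (n : nat) (bs : seq nat) (a : 'rV[int]_n) : Prop :=
  exists i j : 'I_n, i != j /\ same_U bs i j /\ a = ev i - ev j.

Definition thetaBCD (n : nat) (isroot : 'rV[int]_n -> Prop) (bs : seq nat)
  (tt : nat) (a : 'rV[int]_n) : Prop :=
  (exists i j : 'I_n, i != j /\ same_U bs i j /\ a = ev i - ev j) \/
  (isroot a /\ forall k : 'I_n, a 0 k != 0 -> (n - tt <= k)%N).

(** Real span of coroots: sum-zero hyperplane for SU(n), everything otherwise. *)
Definition hR_A (R : numDomainType) (n : nat) (H : 'rV[R]_n) : Prop :=
  \sum_i H 0 i = 0.
Definition hR_full (R : numDomainType) (n : nat) (H : 'rV[R]_n) : Prop := True.

Definition tsp (R : numDomainType) (n : nat) (hR : 'rV[R]_n -> Prop)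
  (theta : 'rV[int]_n -> Prop) (H : 'rV[R]_n) : Prop :=
  hR H /\ forall a, theta a -> pairing a H = 0.

Definition restr (R : numDomainType) (n : nat) (hR : 'rV[R]_n -> Prop)
  (theta : 'rV[int]_n -> Prop) (a : 'rV[int]_n) :
  {H : 'rV[R]_n | tsp hR theta H} -> R :=
  fun H => pairing a (sval H).
Arguments restr : clear implicits.

Definition has_card (T : Type) (A : T -> Prop) (N : nat) : Prop :=
  exists f : 'I_N -> T, injective f /\ forall x, A x <-> exists i, f i = x.

Definition num_summands (R : numDomainType) (n : nat) (hR : 'rV[R]_n -> Prop)
  (pos theta : 'rV[int]_n -> Prop) (N : nat) : Prop :=
  has_card (fun f : {H : 'rV[R]_n | tsp hR theta H} -> R =>
              exists a, pos a /\ ~ theta a /\ f = restr R n hR theta a) N.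

Arguments num_summands : clear implicits.
Arguments thetaA : clear implicits.
Arguments thetaBCD : clear implicits.

From HB Require Import structures.
From mathcomp Require Import all_boot all_order all_algebra.
From mathcomp Require Import reals.
From mathcomp Require Import zify.
From Stdlib Require Import FunctionalExtensionality.
(* An element H of t is constant on each U(n_i)-block of coordinates and
   vanishes on the coordinates of the last factor SO(2t+1), Sp(t) or SO(2t).
   Hence the restriction of a root a to t depends only on its block weight, the
   vector of the sums of the coordinates of a over the blocks.  Conversely the
   block indicators (centered, in type A) lie in t, so two roots have the same
   restriction iff they have the same block weight.  Counting positive t-roots
   thus amounts to listing the block weights of the positive roots outside
   Pi_Theta: eps_a - eps_b (a < b) in type A; eps_a +- eps_b (a <> b) in the
   other types, together with eps_a in type B and, when there is a last factor,
   in types C and D, with 2 eps_a in type C, and with 2 eps_a for the blocks of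
   size > 1 in types B and D. *)

Set Implicit Arguments. Unset Strict Implicit. Unset Printing Implicit Defensive.
Import Order.TTheory GRing.Theory Num.Theory.

Section Blocks.
Variable bs : seq nat.

Definition block_start (c : nat) : nat := sumn (take c bs).

Lemma block_start_mono : {homo block_start : c d / (c <= d)%N}.
Proof.
rewrite /block_start; elim: bs => [|x s IH] [|c] [|d] //=.
by rewrite ltnS => /IH; lia.
Qed.

Lemma block_startS c : (c < size bs)%N -> block_start c.+1 = (block_start c + nth 0 bs c)%N.
Proof. by move=> hc; rewrite /block_start (take_nth 0 hc) sumn_rcons. Qed.

Lemma block_start_size : block_start (size bs) = sumn bs.
Proof. by rewrite /block_start take_size. Qed.

Lemma blk_of_range c i : (c < size bs)%N ->
  (block_start c <= i < block_start c.+1)%N -> blk bs i = c.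
Proof.
move=> hc /andP[lo hi]; rewrite /blk.
have -> : size bs = (c + (size bs - c))%N by lia.
rewrite iotaD count_cat add0n.
rewrite (eq_in_count (a2 := predT)); last first.
  by move=> k; rewrite mem_iota => /andP[_ hk] /=; apply: leq_trans lo; apply: block_start_mono.
rewrite count_predT size_iota (eq_in_count (a2 := pred0)) ?count_pred0 ?addn0 //.
move=> k; rewrite mem_iota => /andP[hk _] /=.
by apply/negbTE; rewrite -ltnNge; apply: leq_trans hi _; apply: block_start_mono.
Qed.

Lemma blk_mono : {homo blk bs : i j / (i <= j)%N}.
Proof. by move=> i j hij; apply: sub_count => k /= hk; apply: leq_trans hk hij. Qed.

Lemma blk_range i : (i < sumn bs)%N ->
  (blk bs i < size bs)%N /\ (block_start (blk bs i) <= i < block_start (blk bs i).+1)%N.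
Proof.
move=> hi; suff [c [hc hci]] : exists c,
    (c < size bs)%N /\ (block_start c <= i < block_start c.+1)%N.
  by rewrite (blk_of_range hc hci).
rewrite /block_start; elim: bs i hi => [|x s IH] i //=.
case: (ltnP i x) => hix hi; first by exists 0%N; split => //=; lia.
have [c [hc hci]] := IH (i - x)%N ltac:(lia).
by exists c.+1; split => //=; lia.
Qed.

Lemma blk_in_block c d : (c < size bs)%N -> (d < nth 0 bs c)%N ->
  blk bs (block_start c + d) = c /\ (block_start c + d < sumn bs)%N.
Proof.
move=> hc hd; have hlt : (block_start c + d < block_start c.+1)%N by rewrite block_startS //; lia.
split; first by apply: blk_of_range => //; rewrite hlt leq_addr.
by apply: leq_trans hlt _; rewrite -block_start_size; apply: block_start_mono.
Qed.

Lemma blk_eq_size_gt1 i j : (i < j)%N -> (j < sumn bs)%N -> blk bs i = blk bs j ->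
  (1 < nth 0 bs (blk bs i))%N.
Proof.
move=> hij hj he; have [hc hjr] := blk_range hj.
have [_ hir] := blk_range (ltn_trans hij hj).
by move: hjr hir; rewrite -he block_startS //; lia.
Qed.

End Blocks.

Local Open Scope ring_scope.

Lemma ev_coord m (i k : 'I_m) : ev i 0 k = (i == k)%:R.
Proof. by rewrite /ev mxE eqxx eq_sym. Qed.

Section BlockWeight.
Variables (n : nat) (bs : seq nat).
Local Notation S := (size bs).

Definition in_block (i : 'I_n) (c : 'I_S) : bool := (i < sumn bs)%N && (blk bs i == c).

Definition block_weight (a : 'rV[int]_n) : 'rV[int]_S :=
  a *m \matrix_(i, c) (in_block i c)%:R.

Lemma block_weightD a b : block_weight (a + b) = block_weight a + block_weight b.
Proof. exact: mulmxDl. Qed.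

Lemma block_weightB a b : block_weight (a - b) = block_weight a - block_weight b.
Proof. exact: mulmxBl. Qed.

Lemma block_weightMn a k : block_weight (a *+ k) = block_weight a *+ k.
Proof. exact: (raddfMn (mulmxr _)). Qed.

Lemma block_weight_ev_in (i : 'I_n) : (i < sumn bs)%N ->
  exists2 c : 'I_S, val c = blk bs i & block_weight (ev i) = ev c.
Proof.
move=> hi; have [hc _] := blk_range hi.
exists (Ordinal hc) => //; apply/matrixP => x c.
rewrite /block_weight /ev -rowE !mxE [x]ord1 eqxx /in_block hi /=.
by rewrite eq_sym; congr (_ %:R); exact: (inj_eq val_inj).
Qed.

Lemma block_weight_ev_out (i : 'I_n) : (sumn bs <= i)%N -> block_weight (ev i) = 0.
Proof.
move=> hi; apply/matrixP => x c.
by rewrite /block_weight /ev -rowE !mxE /in_block ltnNge hi.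
Qed.

Lemma block_weight_tail (a : 'rV[int]_n) : (forall k : 'I_n, a 0 k != 0 -> (sumn bs <= k)%N) ->
  block_weight a = 0.
Proof.
move=> supp; apply/matrixP => x c; rewrite [x]ord1 !mxE big1 // => k _.
rewrite mxE /in_block; have [-> | /supp] := eqVneq (a 0 k) 0; first by rewrite mul0r.
by rewrite leqNgt => /negbTE ->; rewrite mulr0.
Qed.

End BlockWeight.

Section Pairing.
Variables (R : numDomainType) (n : nat).
Implicit Types (a b : 'rV[int]_n) (H : 'rV[R]_n).

Lemma pairingD a b H : pairing (a + b) H = pairing a H + pairing b H.
Proof. by rewrite /pairing -big_split; apply: eq_bigr => i _; rewrite mxE intrD mulrDl. Qed.

Lemma pairingN a H : pairing (- a) H = - pairing a H.
Proof. by rewrite /pairing -sumrN; apply: eq_bigr => i _; rewrite mxE intrN mulNr. Qed.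

Lemma pairingB a b H : pairing (a - b) H = pairing a H - pairing b H.
Proof. by rewrite pairingD pairingN. Qed.

Lemma pairingMn a k H : pairing (a *+ k) H = pairing a H *+ k.
Proof.
elim: k => [|k IH]; last by rewrite !mulrS pairingD IH.
by rewrite /pairing big1 // => i; rewrite mxE mul0r.
Qed.

Lemma pairing_ev (i : 'I_n) H : pairing (ev i) H = H 0 i.
Proof.
rewrite /pairing (bigD1 i) //= ev_coord eqxx mul1r big1 ?addr0 // => k hk.
by rewrite ev_coord eq_sym (negbTE hk) mul0r.
Qed.

Variable bs : seq nat.

Definition block_indicator (c : 'I_(size bs)) : 'rV[R]_n := \row_i (in_block i c)%:R.

Lemma pairing_block_indicator a c :
  pairing a (block_indicator c) = (block_weight bs a 0 c)%:~R.
Proof.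
rewrite /pairing !mxE rmorph_sum; apply: eq_bigr => i _.
by rewrite !mxE; case: in_block; rewrite ?mulr1 ?mulr0.
Qed.

End Pairing.

Section Restriction.
Variables (R : numDomainType) (n : nat) (bs : seq nat) (hR : 'rV[R]_n -> Prop)
  (theta : 'rV[int]_n -> Prop).
Local Notation S := (size bs).
Local Notation t := {H : 'rV[R]_n | tsp hR theta H}.
Hypothesis theta_block_diff :
  forall i j : 'I_n, i != j -> same_U bs i j -> theta (ev i - ev j).
Hypothesis tsp_tail : forall H, tsp hR theta H -> forall i : 'I_n, (sumn bs <= i)%N -> H 0 i = 0.

(* [0] on an empty block, where no coordinate can be picked. *)
Definition block_value (H : 'rV[R]_n) : 'rV[R]_S :=
  \row_c if [pick i | in_block i c] is Some j then H 0 j else 0.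

Lemma tsp_block_const H (i : 'I_n) (c : 'I_S) : tsp hR theta H -> in_block i c ->
  H 0 i = block_value H 0 c.
Proof.
move=> [_ Hth] hic; rewrite mxE; case: pickP => [j hjc | /(_ i)]; last by rewrite hic.
have [-> // | ne] := eqVneq i j.
have /Hth : theta (ev i - ev j).
  apply: (theta_block_diff ne); move: hic hjc => /andP[hi /eqP ci] /andP[hj /eqP cj].
  by rewrite /same_U hi hj ci cj eqxx.
by rewrite pairingB !pairing_ev => /eqP; rewrite subr_eq0 => /eqP.
Qed.

Lemma pairing_block_weight H a : tsp hR theta H ->
  pairing a H = pairing (block_weight bs a) (block_value H).
Proof.
move=> tH; rewrite /pairing; transitivity (\sum_(i < n) \sum_(c < S)
    (a 0 i)%:~R * ((in_block i c)%:R * block_value H 0 c)).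
  apply: eq_bigr => i _; rewrite -mulr_sumr; congr (_ * _).
  have [hi | hi] := ltnP i (sumn bs); last first.
    by rewrite tsp_tail // big1 // => c _; rewrite /in_block ltnNge hi mul0r.
  have [hc _] := blk_range hi.
  have hic : in_block i (Ordinal hc) by rewrite /in_block hi eqxx.
  rewrite (bigD1 (Ordinal hc)) //= hic mul1r -(tsp_block_const tH hic) big1 ?addr0 //.
  move=> c hc'; suff /negbTE -> : ~~ in_block i c by rewrite mul0r.
  by apply: contra hc' => /andP[_ /eqP e]; apply/eqP/val_inj.
rewrite exchange_big; apply: eq_bigr => c _.
rewrite !mxE rmorph_sum mulr_suml; apply: eq_bigr => i _.
by rewrite [in RHS]mxE rmorphM rmorph_nat mulrA.
Qed.

Lemma restr_eq_iff (Q : 'rV[int]_n -> Prop) :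
  (forall c : 'I_S, exists2 H, tsp hR theta H &
     forall a, Q a -> pairing a H = (block_weight bs a 0 c)%:~R) ->
  forall a b, Q a -> Q b ->
  restr R n hR theta a = restr R n hR theta b <-> block_weight bs a = block_weight bs b.
Proof.
move=> hsep a b Qa Qb; split => [e | e].
  apply/matrixP => x c; rewrite [x]ord1; have [H tH Hc] := hsep c.
  move/(congr1 (fun f : t -> R => f (exist _ H tH))): e.
  by rewrite /restr /= !Hc //; apply: intr_inj.
by apply: functional_extensionality => -[H tH]; rewrite /restr /= !pairing_block_weight // e.
Qed.

End Restriction.

Lemma has_card_by_weights (n S : nat) (T : Type) (F : 'rV[int]_n -> T)
    (w : 'rV[int]_n -> 'rV[int]_S) (pos theta : 'rV[int]_n -> Prop)
    (U : finType) (P : pred U) (L : U -> 'rV[int]_S) (N : nat) :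
  #|P| = N ->
  (forall a b, pos a -> pos b -> F a = F b <-> w a = w b) ->
  (forall a, theta a -> w a = 0) ->
  (forall u, P u -> L u != 0) ->
  {in P &, injective L} ->
  (forall u, P u -> exists2 a, pos a & w a = L u) ->
  (forall a, pos a -> ~ theta a -> exists2 u, P u & w a = L u) ->
  has_card (fun f => exists a, pos a /\ ~ theta a /\ f = F a) N.
Proof.
move=> <- hF hth hL0 hLinj hLsurj hwL.
have [ro hro] : exists ro : U -> 'rV[int]_n, forall u, P u -> pos (ro u) /\ w (ro u) = L u.
  apply: (@fin_all_exists U (fun _ => 'rV[int]_n) (fun u a => P u -> pos a /\ w a = L u)) => u.
  by have [/hLsurj [a pa wa] | _] := boolP (P u); [exists a | exists 0].
exists (fun i => F (ro (enum_val i))); split.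
  move=> i j /= e; have hi := enum_valP i; have hj := enum_valP j.
  have [pi wi] := hro _ hi; have [pj wj] := hro _ hj.
  by move: e => /(hF _ _ pi pj); rewrite wi wj => /(hLinj _ _ hi hj) /enum_val_inj.
move=> f; split => [[a [pa [nta ->]]] | [i <-]].
  have [u hu e] := hwL a pa nta; have [pu wu] := hro _ hu.
  by exists (enum_rank_in hu u); rewrite enum_rankK_in //; apply/hF; rewrite ?wu.
have hi := enum_valP i; have [pi wi] := hro _ hi.
exists (ro (enum_val i)); split => //; split => // /hth.
by rewrite wi => /eqP; apply/negP; apply: hL0.
Qed.

Lemma evMn_coord m (c k : 'I_m) p : (ev c *+ p) 0 k = (c == k)%:R *+ p.
Proof. by rewrite mulmxnE ev_coord. Qed.

Section WeightDistinctness.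
Variable S : nat.
Implicit Types a b c : 'I_S.

(* Roots [eps_i - eps_j] and [eps_i + eps_j] between distinct blocks [a < b] have
   block weights [pair_weight a b] and [pair_weight b a] respectively. *)
Definition pair_weight a b : 'rV[int]_S :=
  if (a < b)%N then ev a - ev b else ev a + ev b.

Lemma pair_weight_coord a b k :
  pair_weight a b 0 k = (a == k)%:R + (if (a < b)%N then - (b == k)%:R else (b == k)%:R).
Proof. by rewrite /pair_weight; case: ifP => _; rewrite !mxE eqxx /= !(eq_sym k). Qed.

Lemma evMn_inj a b p q : (0 < p)%N -> ev a *+ p = ev b *+ q -> a = b /\ p = q.
Proof.
move=> p0 /(congr1 (fun x : 'rV_S => x 0 a)); rewrite !evMn_coord eqxx.
have [-> | ne] := eqVneq b a; first by move/eqP; rewrite eqr_nat => /eqP.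
by rewrite mul0rn => /eqP; rewrite pnatr_eq0; lia.
Qed.

Lemma pair_weight_neq_evMn a b c p : a != b -> pair_weight a b != ev c *+ p.
Proof.
move=> ab; apply/eqP => E.
have := congr1 (fun x : 'rV_S => x 0 a) E; have := congr1 (fun x : 'rV_S => x 0 b) E.
rewrite !pair_weight_coord !evMn_coord !eqxx (negbTE ab) [b == a]eq_sym (negbTE ab).
have [-> | _] := eqVneq c a; last first.
  by case: ifP => _ _ /eqP; rewrite /= ?mulr0n ?mul0rn ?mulr1n ?oppr0 addr0 oner_eq0.
rewrite (negbTE ab) /= mulr0n mul0rn add0r.
by case: ifP => _ /eqP; rewrite ?mulr1n ?oppr_eq0 oner_eq0.
Qed.

Lemma pair_weight_first a b : a != b -> pair_weight a b 0 a = 1.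
Proof.
by move=> ab; rewrite pair_weight_coord eqxx eq_sym (negbTE ab); case: ifP; rewrite ?oppr0 addr0.
Qed.

Lemma pair_weight_eq1 a b k : a != b -> pair_weight a b 0 k = 1 ->
  k = a \/ k = b /\ (b < a)%N.
Proof.
move=> ab; rewrite pair_weight_coord.
have [-> | ka] := eqVneq a k; [by left | rewrite add0r].
have [-> | kb] := eqVneq b k; last by case: ifP => _ /eqP; rewrite ?oppr0 eq_sym oner_eq0.
case: ifP => [_ /eqP | ba _]; first by rewrite -subr_eq0 -opprD oppr_eq0.
by right; split => //; move: ka ba; rewrite -(inj_eq val_inj) /=; lia.
Qed.

Lemma pair_weight_inj a b a' b' : a != b -> a' != b' ->
  pair_weight a b = pair_weight a' b' -> a = a' /\ b = b'.
Proof.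
move=> ab ab' E.
have ea : a = a'.
  have := pair_weight_first ab'; rewrite -E => /(pair_weight_eq1 ab) [// | [e1 lt1]].
  have := pair_weight_first ab; rewrite E => /(pair_weight_eq1 ab') [// | [e2 lt2]].
  by move: lt1 lt2; rewrite -e1 -e2; lia.
subst a'; split => //; move/(congr1 (fun x : 'rV_S => x 0 b)): E.
rewrite !pair_weight_coord (negbTE ab) !add0r.
have [// | bb] := eqVneq b' b.
by rewrite eqxx; case: ifP; case: ifP => _ _ /eqP; rewrite ?oppr0 ?oppr_eq0 oner_eq0.
Qed.

End WeightDistinctness.

Lemma evMn_neq0 S (c : 'I_S) p : (0 < p)%N -> ev c *+ p != 0.
Proof. by move=> p0; apply/eqP; rewrite -(mulr0n (ev c)) => /evMn_inj [] // _; lia. Qed.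

Lemma pair_weight_neq0 S (a b : 'I_S) : a != b -> pair_weight a b != 0.
Proof. by move=> ab; rewrite -(mulr0n (ev a)); apply: pair_weight_neq_evMn. Qed.

Section WeightFamilies.
Variables (S k : nat) (hk : (k <= S)%N).

Definition diag_weight (p q : nat) (u : 'I_S * 'I_S + 'I_k) : 'rV[int]_S :=
  match u with
  | inl (a, b) => if a == b then ev a *+ p else pair_weight a b
  | inr c => ev (widen_ord hk c) *+ q
  end.

Lemma diag_weight_inj p q : (0 < p)%N -> (0 < q)%N -> p != q -> injective (diag_weight p q).
Proof.
move=> p0 q0 pq [[a b] | c] [[a' b'] | c'] /=.
- have [<- | ab] := eqVneq a b; have [<- | ab'] := eqVneq a' b'.
  + by case/evMn_inj => // ->.
  + by move/esym/eqP; rewrite (negbTE (pair_weight_neq_evMn _ _ ab')).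
  + by move/eqP; rewrite (negbTE (pair_weight_neq_evMn _ _ ab)).
  + by case/(pair_weight_inj ab ab') => -> ->.
- have [_ | ab] := eqVneq a b; last by move/eqP; rewrite (negbTE (pair_weight_neq_evMn _ _ ab)).
  by case/evMn_inj => // _ e; move: pq; rewrite e eqxx.
- have [_ | ab'] := eqVneq a' b'; last first.
    by move/esym/eqP; rewrite (negbTE (pair_weight_neq_evMn _ _ ab')).
  by case/evMn_inj => // _ e; move: pq; rewrite e eqxx.
- by case/evMn_inj => // /(congr1 val) e _; congr inr; apply: val_inj.
Qed.

Lemma diag_weight_neq0 p q u : (0 < p)%N -> (0 < q)%N -> diag_weight p q u != 0.
Proof.
move=> p0 q0; case: u => [[a b] | c] /=; last exact: evMn_neq0.
by have [_ | ab] := eqVneq a b; [apply: evMn_neq0 | apply: pair_weight_neq0].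
Qed.

Definition offdiag_weight (u : 'I_S * 'I_S.-1 + 'I_k) : 'rV[int]_S :=
  match u with
  | inl (a, j) => pair_weight a (lift a j)
  | inr c => ev (widen_ord hk c) *+ 2
  end.

Lemma offdiag_weight_inj : injective offdiag_weight.
Proof.
move=> [[a j] | c] [[a' j'] | c'] /=.
- by case/(pair_weight_inj (neq_lift a j) (neq_lift a' j')) => ea; subst a' => /lift_inj ->.
- by move/eqP; rewrite (negbTE (pair_weight_neq_evMn _ _ (neq_lift a j))).
- by move/esym/eqP; rewrite (negbTE (pair_weight_neq_evMn _ _ (neq_lift a' j'))).
- by case/evMn_inj => // /(congr1 val) e _; congr inr; apply: val_inj.
Qed.

Lemma offdiag_weight_neq0 u : offdiag_weight u != 0.
Proof. by case: u => [[a j] | c] /=; [apply/pair_weight_neq0/neq_lift | apply: evMn_neq0]. Qed.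

End WeightFamilies.

Lemma block_start_lt (bs : seq nat) (c d : 'I_(size bs)) :
  (forall c, (c < size bs)%N -> (0 < nth 0 bs c)%N) ->
  (c < d)%N -> (block_start bs c < block_start bs d)%N.
Proof.
move=> bs_pos cd; apply: (@leq_trans (block_start bs c.+1)); last exact: block_start_mono.
by rewrite block_startS //; have := bs_pos _ (ltn_ord c); lia.
Qed.

Section BlockRoots.
Variables (n : nat) (bs : seq nat) (tt : nat).
Hypothesis hn : n = (sumn bs + tt)%N.
Hypothesis bs_pos : forall c, (c < size bs)%N -> (0 < nth 0 bs c)%N.
Local Notation S := (size bs).

Lemma block_weight_ev_block (c : 'I_S) d : (d < nth 0 bs c)%N ->
  exists2 i : 'I_n, nat_of_ord i = (block_start bs c + d)%N & block_weight bs (ev i) = ev c.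
Proof.
move=> hd; have [hb hl] := blk_in_block (ltn_ord c) hd.
have hi : (block_start bs c + d < n)%N by lia.
exists (Ordinal hi); first by [].
have [c' e ->] := block_weight_ev_in (i := Ordinal hi) hl.
by congr ev; apply: val_inj; rewrite e hb.
Qed.

Lemma long_pos_weight_pair (a b : 'I_S) : a != b ->
  exists2 r : 'rV[int]_n, long_pos r & block_weight bs r = pair_weight a b.
Proof.
move=> ab; have [i ei wi] := block_weight_ev_block (bs_pos (ltn_ord a)).
have [j ej wj] := block_weight_ev_block (bs_pos (ltn_ord b)).
rewrite !addn0 in ei ej; rewrite /pair_weight; case: ifP => hab.
  exists (ev i - ev j); last by rewrite block_weightB wi wj.
  by exists i, j; split; [rewrite ei ej; apply: block_start_lt | left].
have hba : (b < a)%N by move: ab hab; rewrite -(inj_eq val_inj) /=; lia.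
exists (ev j + ev i); last by rewrite block_weightD wi wj addrC.
by exists j, i; split; [rewrite ei ej; apply: block_start_lt | right].
Qed.

Lemma long_pos_weight_ev (c : 'I_S) : (0 < tt)%N ->
  exists2 r : 'rV[int]_n, long_pos r & block_weight bs r = ev c.
Proof.
move=> tt0; have [i ei wi] := block_weight_ev_block (bs_pos (ltn_ord c)).
have [_ hl] := blk_in_block (ltn_ord c) (bs_pos (ltn_ord c)).
have ht : (sumn bs < n)%N by lia.
exists (ev i - ev (Ordinal ht)); first by exists i, (Ordinal ht); split; [rewrite ei | left].
by rewrite block_weightB wi block_weight_ev_out // subr0.
Qed.

Lemma long_pos_weight_ev2 (c : 'I_S) : (1 < nth 0 bs c)%N ->
  exists2 r : 'rV[int]_n, long_pos r & block_weight bs r = ev c *+ 2.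
Proof.
move=> c2; have [i ei wi] := block_weight_ev_block (ltnW c2).
have [j ej wj] := block_weight_ev_block c2.
exists (ev i + ev j); last by rewrite block_weightD wi wj mulr2n.
by exists i, j; split; [rewrite ei ej; lia | right].
Qed.

Lemma block_weight_ev_same (i j : 'I_n) : same_U bs i j ->
  block_weight bs (ev i) = block_weight bs (ev j).
Proof.
case/and3P=> hi hj /eqP e; have [c ec ->] := block_weight_ev_in hi.
by have [c' ec' ->] := block_weight_ev_in hj; congr ev; apply: val_inj; rewrite ec ec' e.
Qed.

Variable isroot : 'rV[int]_n -> Prop.
Local Notation theta := (thetaBCD n isroot bs tt).

Lemma block_weight_thetaBCD a : theta a -> block_weight bs a = 0.
Proof.
case=> [[i [j [_ [ij ->]]]] | [_ supp]].
  by rewrite block_weightB (block_weight_ev_same ij) subrr.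
by apply: block_weight_tail => k /supp; lia.
Qed.

Lemma tail_supported_evMn (i : 'I_n) p : (sumn bs <= i)%N ->
  forall k : 'I_n, (ev i *+ p) 0 k != 0 -> (n - tt <= k)%N.
Proof.
move=> hi k; rewrite evMn_coord.
by have [<- _ | _] := eqVneq i k; [lia | rewrite mul0rn eqxx].
Qed.

Lemma tail_supported_pair (i j : 'I_n) a : (sumn bs <= i)%N -> (sumn bs <= j)%N ->
  a = ev i - ev j \/ a = ev i + ev j -> forall k : 'I_n, a 0 k != 0 -> (n - tt <= k)%N.
Proof.
move=> hi hj ha k; have [<- | ik] := eqVneq i k; first by lia.
have [<- | jk] := eqVneq j k; first by lia.
by case: ha => ->; rewrite !mxE /= !(eq_sym k) (negbTE ik) (negbTE jk).
Qed.

Hypothesis long_isroot : forall a, long_root a -> isroot a.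

Lemma long_pos_weight_cases a : long_pos a -> ~ theta a -> [\/
  exists2 x : 'I_S * 'I_S, x.1 != x.2 & block_weight bs a = pair_weight x.1 x.2,
  (0 < tt)%N /\ exists c : 'I_S, block_weight bs a = ev c |
  exists2 c : 'I_S, (1 < nth 0 bs c)%N & block_weight bs a = ev c *+ 2].
Proof.
move=> [i [j [ij ha]]] nta.
have i_neq_j : i != j by rewrite -(inj_eq val_inj) neq_ltn ij.
have [hj | hj] := ltnP j (sumn bs); last first.
  have [hi | hi] := ltnP i (sumn bs); last first.
    case: nta; right; split; last exact: tail_supported_pair hi hj ha.
    by apply: long_isroot; exists i, j; split => //; case: ha => ->; [left | right; left].
  have [ci _ wi] := block_weight_ev_in hi.
  constructor 2; split; first by have := ltn_ord j; lia.
  exists ci; case: ha => ->;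
    by rewrite ?block_weightB ?block_weightD wi block_weight_ev_out // ?subr0 ?addr0.
have hi : (i < sumn bs)%N by lia.
have [ci ei wi] := block_weight_ev_in hi; have [cj ej wj] := block_weight_ev_in hj.
have [ecc | ne] := eqVneq ci cj.
  have sU : same_U bs i j by rewrite /same_U hi hj -ei -ej ecc eqxx.
  case: ha => ha; first by case: nta; left; exists i, j; rewrite ha.
  constructor 3; exists ci; last by rewrite ha block_weightD wi wj ecc mulr2n.
  by rewrite ei; apply: (blk_eq_size_gt1 ij hj); rewrite -ei -ej ecc.
have lt : (ci < cj)%N.
  have : (ci <= cj)%N by rewrite ei ej; apply: blk_mono; lia.
  by move: ne; rewrite -(inj_eq val_inj) /=; lia.
constructor 1; case: ha => ->.
  by exists (ci, cj); rewrite //= block_weightB wi wj /pair_weight lt.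
by exists (cj, ci); rewrite /= 1?eq_sym // block_weightD wi wj /pair_weight ltnNge (ltnW lt) addrC.
Qed.

End BlockRoots.

Section ClassicalFlags.
Variables (R : numDomainType) (n m tt : nat) (ns : seq nat).
Hypothesis ns_gt1 : all (fun k => 1 < k)%N ns.
Hypothesis hn : n = (sumn ns + m + tt)%N.
Local Notation bs := (ns ++ nseq m 1%N).
Local Notation theta isroot := (thetaBCD n isroot bs tt).

Lemma size_bs : size bs = (size ns + m)%N.
Proof. by rewrite size_cat size_nseq. Qed.

Lemma n_sumn_bs : n = (sumn bs + tt)%N.
Proof. by rewrite sumn_cat sumn_nseq mul1n hn. Qed.

Lemma nth_bs_ns c : (c < size ns)%N -> (1 < nth 0 bs c)%N.
Proof. by move=> hc; rewrite nth_cat hc; apply: (allP ns_gt1); apply: mem_nth. Qed.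

Lemma nth_bs_pos c : (c < size bs)%N -> (0 < nth 0 bs c)%N.
Proof.
move=> hc; have [/nth_bs_ns | hc'] := ltnP c (size ns); first exact: ltnW.
rewrite nth_cat (leq_gtF hc') nth_nseq; move: hc; rewrite size_bs; case: ifP => //; lia.
Qed.

Lemma nth_bs_gt1 c : (1 < nth 0 bs c)%N -> (c < size ns)%N.
Proof. by rewrite nth_cat; case: ifP => // _; rewrite nth_nseq; case: ifP. Qed.

Lemma size_ns_bs : (size ns <= size bs)%N.
Proof. by rewrite size_bs leq_addr. Qed.

Lemma num_summands_by_weights isroot pos (U : finType) (L : U -> 'rV[int]_(size bs)) N :
  (forall H, tsp (@hR_full R n) (theta isroot) H ->
     forall i : 'I_n, (sumn bs <= i)%N -> H 0 i = 0) ->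
  #|U| = N -> injective L -> (forall u, L u != 0) ->
  (forall u, exists2 a, pos a & block_weight bs a = L u) ->
  (forall a, pos a -> ~ theta isroot a -> exists u, block_weight bs a = L u) ->
  num_summands R n (@hR_full R n) pos (theta isroot) N.
Proof.
move=> tsp_tail cardU Linj L0 Lsurj wL.
have restr_eq a b : restr R n (@hR_full R n) (theta isroot) a =
    restr R n (@hR_full R n) (theta isroot) b <-> block_weight bs a = block_weight bs b.
  apply: (restr_eq_iff _ tsp_tail (Q := fun _ => True)) => //.
  - by move=> i j ij sU; left; exists i, j.
  - move=> c; exists (block_indicator R n c); last by move=> a' _; rewrite pairing_block_indicator.
    by split=> // a' ha'; rewrite pairing_block_indicator (block_weight_thetaBCD n_sumn_bs ha') mxE.
apply: (has_card_by_weights (w := block_weight bs) (P := predT) (L := L) cardU).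
- by move=> a' b' _ _; apply: restr_eq.
- by move=> a /(block_weight_thetaBCD n_sumn_bs).
- by move=> u _; apply: L0.
- by move=> u v _ _; apply: Linj.
- by move=> u _; apply: Lsurj.
- by move=> a pa nta; have [u e] := wL a pa nta; exists u.
Qed.

Lemma num_summands_B :
  num_summands R n (@hR_full R n) (@posrootsB n) (theta (@rootsB n))
    ((size ns + m) ^ 2 + size ns).
Proof.
apply: (num_summands_by_weights (L := diag_weight size_ns_bs 1 2)).
- move=> H [_ Hth] i hi; rewrite -(pairing_ev i H); apply: Hth; right.
  split; first by right; exists i; left.
  by rewrite -[ev i]mulr1n; apply: (tail_supported_evMn n_sumn_bs hi).
- by rewrite card_sum card_prod !card_ord size_bs mulnn.
- exact: diag_weight_inj.
- by move=> u; apply: diag_weight_neq0.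
- move=> [[a b] | c] /=; last first.
    have [r hr wr] :=
      long_pos_weight_ev2 n_sumn_bs (c := widen_ord size_ns_bs c) (nth_bs_ns (ltn_ord c)).
    by exists r; [left | rewrite wr].
  have [_ | ab] := eqVneq a b; last first.
    by have [r hr wr] := long_pos_weight_pair n_sumn_bs nth_bs_pos ab; exists r; [left | ].
  have [i _ wi] := block_weight_ev_block n_sumn_bs (nth_bs_pos (ltn_ord a)).
  by exists (ev i); [right; exists i | ].
move=> a [ha | [i ->]] nta.
  case: (long_pos_weight_cases n_sumn_bs (fun a ha => or_introl ha) ha nta).
  - by move=> [[x y] /= xy wa]; exists (inl (x, y)); rewrite /= (negbTE xy).
  - by move=> [_ [c wa]]; exists (inl (c, c)); rewrite /= eqxx.
  - move=> [c /nth_bs_gt1 cs wa]; exists (inr (Ordinal cs)).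
    by rewrite wa; congr (ev _ *+ 2); apply: val_inj.
have [hi | hi] := ltnP i (sumn bs).
  by have [c _ wi] := block_weight_ev_in hi; exists (inl (c, c)); rewrite /= eqxx.
case: nta; right; split; first by right; exists i; left.
by rewrite -[ev i]mulr1n; apply: (tail_supported_evMn n_sumn_bs hi).
Qed.

Lemma num_summands_C :
  num_summands R n (@hR_full R n) (@posrootsC n) (theta (@rootsC n))
    ((size ns + m) ^ 2 + (0 < tt) * (size ns + m)).
Proof.
have hk : ((0 < tt) * size bs <= size bs)%N by case: (0 < tt)%N; rewrite ?mul1n ?mul0n.
apply: (num_summands_by_weights (L := diag_weight hk 2 1)).
- move=> H [_ Hth] i hi; have : pairing (ev i *+ 2) H = 0.
    apply: Hth; right.
    by split; [right; exists i; left | exact: (tail_supported_evMn n_sumn_bs hi)].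
  by rewrite pairingMn pairing_ev => /eqP; rewrite mulrn_eq0 => /eqP.
- by rewrite card_sum card_prod !card_ord size_bs mulnn.
- exact: diag_weight_inj.
- by move=> u; apply: diag_weight_neq0.
- move=> [[a b] | c] /=; last first.
    have tt0 : (0 < tt)%N.
      by move: (leq_ltn_trans (leq0n c) (ltn_ord c)); case: (0 < tt)%N.
    have [r hr wr] := long_pos_weight_ev n_sumn_bs nth_bs_pos (widen_ord hk c) tt0.
    by exists r; [left | ].
  have [_ | ab] := eqVneq a b; last first.
    by have [r hr wr] := long_pos_weight_pair n_sumn_bs nth_bs_pos ab; exists r; [left | ].
  have [i _ wi] := block_weight_ev_block n_sumn_bs (nth_bs_pos (ltn_ord a)).
  by exists (ev i *+ 2); [right; exists i | rewrite block_weightMn wi].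
move=> a [ha | [i ->]] nta.
  case: (long_pos_weight_cases n_sumn_bs (fun a ha => or_introl ha) ha nta).
  - by move=> [[x y] /= xy wa]; exists (inl (x, y)); rewrite /= (negbTE xy).
  - move=> [tt0 [c wa]]; have ck : (c < (0 < tt) * size bs)%N by rewrite tt0 mul1n.
    by exists (inr (Ordinal ck)); rewrite wa; congr (ev _ *+ 1); apply: val_inj.
  - by move=> [c _ wa]; exists (inl (c, c)); rewrite /= eqxx.
have [hi | hi] := ltnP i (sumn bs).
  by have [c _ wi] := block_weight_ev_in hi; exists (inl (c, c)); rewrite /= eqxx block_weightMn wi.
case: nta; right; split; first by right; exists i; left.
exact: (tail_supported_evMn n_sumn_bs hi).
Qed.

Lemma num_summands_Dii : (2 <= tt)%N ->
  num_summands R n (@hR_full R n) (@posrootsD n) (theta (@rootsD n))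
    ((size ns + m) ^ 2 + size ns).
Proof.
move=> tt2; apply: (num_summands_by_weights (L := diag_weight size_ns_bs 1 2)).
- move=> H [_ Hth] i hi.
  have [j ji hj] : exists2 j : 'I_n, j != i & (sumn bs <= j)%N.
    have hj : (sumn bs + (i == sumn bs :> nat) < n)%N.
      by move: (ltn_ord i) n_sumn_bs; case: eqP; lia.
    by exists (Ordinal hj); [rewrite -(inj_eq val_inj) /=; case: eqP; lia | rewrite leq_addr].
  have ij : i != j by rewrite eq_sym.
  have tail_root a : a = ev i - ev j \/ a = ev i + ev j -> pairing a H = 0.
    move=> ha; apply: Hth; right; split; last exact: (tail_supported_pair n_sumn_bs hi hj ha).
    by exists i, j; split => //; case: ha => ->; [left | right; left].
  have := tail_root _ (or_introl erefl); have := tail_root _ (or_intror erefl).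
  rewrite pairingB pairingD !pairing_ev => /eqP hD /eqP; rewrite subr_eq0 => /eqP hB.
  by move: hD; rewrite -hB -mulr2n mulrn_eq0 => /eqP.
- by rewrite card_sum card_prod !card_ord size_bs mulnn.
- exact: diag_weight_inj.
- by move=> u; apply: diag_weight_neq0.
- move=> [[a b] | c] /=; last first.
    exact: (long_pos_weight_ev2 n_sumn_bs (c := widen_ord size_ns_bs c) (nth_bs_ns (ltn_ord c))).
  have [_ | ab] := eqVneq a b; last exact: (long_pos_weight_pair n_sumn_bs nth_bs_pos ab).
  exact: (long_pos_weight_ev n_sumn_bs nth_bs_pos a (ltn_trans (ltnSn 0) tt2)).
move=> a ha nta.
case: (long_pos_weight_cases n_sumn_bs (fun a ha => ha) ha nta).
- by move=> [[x y] /= xy wa]; exists (inl (x, y)); rewrite /= (negbTE xy).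
- by move=> [_ [c wa]]; exists (inl (c, c)); rewrite /= eqxx.
- move=> [c /nth_bs_gt1 cs wa]; exists (inr (Ordinal cs)).
  by rewrite wa; congr (ev _ *+ 2); apply: val_inj.
Qed.

Lemma num_summands_Di : tt = 0%N ->
  num_summands R n (@hR_full R n) (@posrootsD n) (theta (@rootsD n))
    ((size ns + m) ^ 2 - m).
Proof.
move=> tt0; apply: (num_summands_by_weights (L := offdiag_weight size_ns_bs)).
- by move=> H _ i hi; move: (ltn_ord i) n_sumn_bs; rewrite tt0; lia.
- by rewrite card_sum card_prod !card_ord size_bs -subn1 mulnBr muln1 -mulnn; nia.
- exact: offdiag_weight_inj.
- exact: offdiag_weight_neq0.
- move=> [[a j] | c] /=; first exact: (long_pos_weight_pair n_sumn_bs nth_bs_pos (neq_lift a j)).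
  exact: (long_pos_weight_ev2 n_sumn_bs (c := widen_ord size_ns_bs c) (nth_bs_ns (ltn_ord c))).
move=> a ha nta.
case: (long_pos_weight_cases n_sumn_bs (fun a ha => ha) ha nta).
- move=> [[x y] /= xy wa]; have [j ey | ey] := unliftP x y; last by move: xy; rewrite ey eqxx.
  by exists (inl (x, j)); rewrite wa ey.
- by rewrite tt0 => -[].
- move=> [c /nth_bs_gt1 cs wa]; exists (inr (Ordinal cs)).
  by rewrite wa; congr (ev _ *+ 2); apply: val_inj.
Qed.

End ClassicalFlags.

Lemma card_ltn_pairs S : #|[pred p : 'I_S * 'I_S | (p.1 < p.2)%N]| = (S * (S - 1) %/ 2)%N.
Proof.
rewrite -sum1_card -(pair_big_dep xpredT (fun a b : 'I_S => (a < b)%N) (fun _ _ => 1%N)) /=.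
under eq_bigr => a _ do rewrite big_mkcond /=.
rewrite exchange_big /= (eq_bigr (fun b : 'I_S => nat_of_ord b)) => [|b _].
  by rewrite -(big_mkord xpredT (fun b => b)) bin2_sum bin2 -divn2 subn1.
rewrite -(big_mkord xpredT (fun a => if (a < b)%N then 1%N else 0%N)).
rewrite (big_cat_nat _ (n := b)) //= ?(ltnW (ltn_ord b)) // big_nat_cond.
rewrite (eq_bigr (fun _ => 1%N)) => [|i /andP[/andP[_ ->]] //].
rewrite -big_nat_cond sum_nat_const_nat subn0 muln1 big_nat_cond big1 ?addn0 //.
by move=> i /andP[/andP[h _] _]; rewrite ltnNge h.
Qed.

Section TypeA.
Variables (R : numFieldType) (n : nat) (ns : seq nat).
Hypothesis ns_pos : all (fun k => 0 < k)%N ns.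
Hypothesis hn : sumn ns = n.
Local Notation S := (size ns).
Local Notation theta := (thetaA n ns).

Let n_ns : n = (sumn ns + 0)%N. Proof. by rewrite addn0. Qed.

Let nth_ns_pos c : (c < S)%N -> (0 < nth 0 ns c)%N.
Proof. by move=> hc; apply: (allP ns_pos); apply: mem_nth. Qed.

Lemma block_weight_thetaA a : theta a -> block_weight ns a = 0.
Proof. by case=> [i [j [_ [ij ->]]]]; rewrite block_weightB (block_weight_ev_same ij) subrr. Qed.

(* Centering a block indicator keeps its pairings with the roots and puts it in
   the sum-zero hyperplane. *)
Lemma block_indicator_centered (c : 'I_S) : exists2 H : 'rV[R]_n, tsp (@hR_A R n) theta H &
  forall a, (exists i j : 'I_n, a = ev i - ev j) -> pairing a H = (block_weight ns a 0 c)%:~R.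
Proof.
have n0 : n != 0%N.
  by have [_ hl] := blk_in_block (ltn_ord c) (nth_ns_pos (ltn_ord c)); rewrite -hn -lt0n; lia.
pose lam : R := (\sum_k block_indicator R n c 0 k) / n%:R.
pose H : 'rV[R]_n := \row_k (block_indicator R n c 0 k - lam).
have pairing_H i j : pairing (ev i - ev j) H = pairing (ev i - ev j) (block_indicator R n c).
  by rewrite !pairingB !pairing_ev !mxE opprB addrA subrK.
exists H; last by move=> a [i [j ->]]; rewrite pairing_H pairing_block_indicator.
split.
  rewrite /hR_A (eq_bigr (fun k => block_indicator R n c 0 k - lam)) => [|k _]; last by rewrite mxE.
  by rewrite sumrB sumr_const card_ord -mulr_natr divfK ?subrr // pnatr_eq0.
move=> a ha; have := block_weight_thetaA ha; case: ha => [i [j [_ [_ ->]]]] wa.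
by rewrite pairing_H pairing_block_indicator wa mxE.
Qed.

Lemma num_summands_A :
  num_summands R n (@hR_A R n) (@posrootsA n) theta (S * (S - 1) %/ 2).
Proof.
apply: (has_card_by_weights (w := block_weight ns) (L := fun p => pair_weight p.1 p.2)
  (card_ltn_pairs S)).
- move=> a b [i [j [_ ha]]] [i' [j' [_ hb]]]; apply: (restr_eq_iff _ _ block_indicator_centered).
  + by move=> i'' j'' ij sU; exists i'', j''.
  + by move=> H _ k hk; move: (ltn_ord k) hn; lia.
  + by exists i, j.
  + by exists i', j'.
- exact: block_weight_thetaA.
- by move=> [a b] /= ab; apply/pair_weight_neq0; rewrite neq_ltn ab.
- move=> [a b] [a' b']; rewrite !inE /= => ab ab' /pair_weight_inj.
  by rewrite !neq_ltn ab ab' => /(_ isT isT) [-> ->].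
- move=> [a b] /= ab.
  have [i ei wi] := block_weight_ev_block n_ns (nth_ns_pos (ltn_ord a)).
  have [j ej wj] := block_weight_ev_block n_ns (nth_ns_pos (ltn_ord b)).
  exists (ev i - ev j); last by rewrite block_weightB wi wj /pair_weight ab.
  by exists i, j; split => //; rewrite ei ej !addn0; apply: block_start_lt.
move=> a [i [j [ij ha]]] nta.
have hj : (j < sumn ns)%N by rewrite hn.
have hi : (i < sumn ns)%N by lia.
have [ci ei wi] := block_weight_ev_in hi; have [cj ej wj] := block_weight_ev_in hj.
have [ecc | ne] := eqVneq ci cj.
  case: nta; rewrite ha; exists i, j; split; first by rewrite -(inj_eq val_inj) neq_ltn ij.
  by split => //; rewrite /same_U hi hj -ei -ej ecc eqxx.
have lt : (ci < cj)%N.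
  have : (ci <= cj)%N by rewrite ei ej; apply: blk_mono; lia.
  by move: ne; rewrite -(inj_eq val_inj) /=; lia.
by exists (ci, cj); rewrite //= ha block_weightB wi wj /pair_weight lt.
Qed.

End TypeA.

Theorem theorem3p1 (R : realType) :
  (* (A) SU(n)/S(U(n_1) x ... x U(n_s)) *)
  (forall (n : nat) (ns : seq nat),
     all (fun k => 0 < k)%N ns -> sumn ns = n ->
     num_summands R n (@hR_A R n) (@posrootsA n) (thetaA n ns)
       ((size ns * (size ns - 1)) %/ 2)%N) /\
  (* (B i) *)
  (forall (n m : nat) (ns : seq nat),
     (2 <= n)%N -> all (fun k => 1 < k)%N ns -> (sumn ns + m)%N = n ->
     num_summands R n (@hR_full R n) (@posrootsB n)
       (thetaBCD n (@rootsB n) (ns ++ nseq m 1%N) 0)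
       ((size ns + m) ^ 2 + size ns)%N) /\
  (* (B ii) *)
  (forall (n m t : nat) (ns : seq nat),
     (2 <= t)%N -> all (fun k => 1 < k)%N ns -> (sumn ns + t + m)%N = n ->
     num_summands R n (@hR_full R n) (@posrootsB n)
       (thetaBCD n (@rootsB n) (ns ++ nseq m 1%N) t)
       ((size ns + m) ^ 2 + size ns)%N) /\
  (* (C i) *)
  (forall (n m : nat) (ns : seq nat),
     (3 <= n)%N -> all (fun k => 1 < k)%N ns -> (sumn ns + m)%N = n ->
     num_summands R n (@hR_full R n) (@posrootsC n)
       (thetaBCD n (@rootsC n) (ns ++ nseq m 1%N) 0)
       ((size ns + m) ^ 2)%N) /\
  (* (C ii) *)
  (forall (n m t : nat) (ns : seq nat),
     (3 <= t)%N -> all (fun k => 1 < k)%N ns -> (sumn ns + t + m)%N = n ->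
     num_summands R n (@hR_full R n) (@posrootsC n)
       (thetaBCD n (@rootsC n) (ns ++ nseq m 1%N) t)
       ((size ns + m) ^ 2 + (size ns + m))%N) /\
  (* (D i) *)
  (forall (n m : nat) (ns : seq nat),
     (4 <= n)%N -> all (fun k => 1 < k)%N ns -> (sumn ns + m)%N = n ->
     num_summands R n (@hR_full R n) (@posrootsD n)
       (thetaBCD n (@rootsD n) (ns ++ nseq m 1%N) 0)
       ((size ns + m) ^ 2 - m)%N) /\
  (* (D ii) *)
  (forall (n m t : nat) (ns : seq nat),
     (4 <= t)%N -> all (fun k => 1 < k)%N ns -> (sumn ns + t + m)%N = n ->
     num_summands R n (@hR_full R n) (@posrootsD n)
       (thetaBCD n (@rootsD n) (ns ++ nseq m 1%N) t)
       ((size ns + m) ^ 2 + size ns)%N).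
Proof.
split; first exact: num_summands_A.
split; first by move=> n m ns _ ns_gt1 hn; apply: num_summands_B ns_gt1 _; lia.
split; first by move=> n m t ns _ ns_gt1 hn; apply: num_summands_B ns_gt1 _; lia.
split.
  move=> n m ns _ ns_gt1 hn; have hn' : n = (sumn ns + m + 0)%N by lia.
  by have := num_summands_C R ns_gt1 hn'; rewrite /= mul0n addn0.
split.
  move=> n m t ns t3 ns_gt1 hn; have hn' : n = (sumn ns + m + t)%N by lia.
  by have := num_summands_C R ns_gt1 hn'; rewrite (ltn_trans _ t3) // mul1n.
split; first by move=> n m ns _ ns_gt1 hn; apply: num_summands_Di ns_gt1 _ _; lia.
by move=> n m t ns t4 ns_gt1 hn; apply: num_summands_Dii ns_gt1 _ _; lia.
Qed.
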